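(* In the model described in the context (for any $n>2$, any $\mu\in(0,1)$, any finite set $Q$ of full-support conditional distributions, any collection $\mathcal{R}$ of admissible DAGs, any ideal policy $d^*\in D$ and any symmetric convex cost function $C$ with $C(0)=C'(0)=0$), an equilibrium $(\alpha,\sigma)$ exists.
   Context: Let $n>2$ and $X=X_1\times\cdots\times X_n$ with $X_i=\{0,1\}$. For $x\in X$, write $a=x_1$ (action) and $y=x_n$ (consequence). For $N\subseteq\{1,\dots,n\}$, $X_N=\times_{i\in N}X_i$. Let $Q$ be a finite set of conditional distributions of $(x_2,\dots,x_{n-1})$ given $(x_1,x_n)$, each with full support for every $(x_1,x_n)$. For $\alpha,\mu\in(0,1)$, $P_{\alpha,\mu}$ is the set of distributions $p$ on $X$ with $p(a=1)=\alpha$, $p(y=1\mid a)=\mu$ for both values of $a$, and $p(\cdot\mid x_1,x_n)\in Q$. A DAG is a pair $(N,R)$ with $N\subseteq\{1,\dots,n\}$ and $R\subseteq N\times N$ acyclic; $R(i)=\{j\in N: jRi\}$. $\mathcal{R}$ is a (finite) collection of DAGs $(N,R)$ with $\{1,n\}\subseteq N$ and no directed path from $n$ to $1$. A narrative is a pair $s=(p,R)\in P_{\alpha,\mu}\times\mathcal{R}$; it induces $p_R(x_N)=\prod_{i\in N}p(x_i\mid x_{R(i)})$, and $p_R(y\mid a)$ is the conditional derived from $p_R$. Let $D=[\varepsilon,1-\varepsilon]$ for a small $\varepsilon>0$ (policies $d$ = proposed frequency of $a=1$). Gross anticipatory utility: $V(s,d\mid\alpha)=d\,p_R(y=1\mid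 a=1)+(1-d)\,p_R(y=1\mid a=0)$. With ideal policy $d^*\in D$ and a symmetric convex cost function $C$ with $C(0)=C'(0)=0$, net anticipatory utility is $U(s,d\mid\alpha)=V(s,d\mid\alpha)-C(d-d^* )$. An equilibrium is a pair of $\alpha\in[0,1]$ and a probability distribution $\sigma$ over narrative-policy pairs $(s,d)\in P_{\alpha,\mu}\times\mathcal{R}\times D$ such that every element of the support of $\sigma$ maximizes $U(s,d\mid\alpha)$ over $P_{\alpha,\mu}\times\mathcal{R}\times D$, and $\alpha=\sum_{(s,d)}\sigma(s,d)\,d$. *)

From HB Require Import structures.
From mathcomp Require Import all_boot all_order all_algebra.
From mathcomp Require Import all_classical all_reals all_analysis.
Set Implicit Arguments. Unset Strict Implicit. Unset Printing Implicit Defensive.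
Import Order.TTheory GRing.Theory Num.Theory.
Local Open Scope ring_scope.

(* Coordinates are indexed by 'I_n; coordinate 1 of the paper is the index
   with value 0, coordinate n of the paper is the index with value n-1. *)
Definition X (n : nat) := {ffun 'I_n -> bool}.

Definition isA (n : nat) (i : 'I_n) : bool := val i == 0%N.
Definition isY (n : nat) (i : 'I_n) : bool := val i == n.-1.

Definition aval (n : nat) (x : X n) : bool := [exists i, isA i && x i].
Definition yval (n : nat) (x : X n) : bool := [exists i, isY i && x i].

Definition endpts (n : nat) : {set 'I_n} := [set i | isA i || isY i].

Definition marg {R : realType} (n : nat) (p : X n -> R) (S : {set 'I_n})
  (x : X n) : R :=
  \sum_(z : X n | [forall i in S, z i == x i]) p z.

Definition cond {R : realType} (n : nat) (p : X n -> R) (i : 'I_n)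
  (S : {set 'I_n}) (x : X n) : R :=
  marg p (i |: S) x / marg p S x.

Definition is_distr {R : realType} (n : nat) (p : X n -> R) : Prop :=
  (forall x, 0 <= p x) /\ \sum_(x : X n) p x = 1.

(* q x = probability of the middle coordinates (x_2..x_{n-1}) of x given
   the endpoint coordinates (x_1, x_n) of x; full support. *)
Definition is_full_cond_dist {R : realType} (n : nat) (q : {ffun X n -> R})
  : Prop :=
  (forall x, 0 < q x) /\
  (forall x, \sum_(z : X n | [forall i in endpts n, z i == x i]) q z = 1).

Definition probA {R : realType} (n : nat) (p : X n -> R) (b : bool) : R :=
  \sum_(x : X n | aval x == b) p x.

Definition condYA {R : realType} (n : nat) (p : X n -> R) (b : bool) : R :=
  (\sum_(x : X n | (aval x == b) && yval x) p x) / probA p b.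

Definition inP {R : realType} (n : nat) (alpha mu : R)
  (Q : seq {ffun X n -> R}) (p : X n -> R) : Prop :=
  is_distr p /\ probA p true = alpha /\ (forall b, condYA p b = mu) /\
  exists2 q, q \in Q & forall x, p x / marg p (endpts n) x = q x.

(* A DAG (N, R): node set N and edge set R (pairs (j,i) meaning j R i). *)
Definition DAG (n : nat) := ({set 'I_n} * {set ('I_n * 'I_n)})%type.

Definition edge (n : nat) (g : DAG n) : rel 'I_n := fun u v => (u, v) \in g.2.

Definition admissible (n : nat) (g : DAG n) : Prop :=
  (forall i j, (i, j) \in g.2 -> (i \in g.1) && (j \in g.1)) /\
  (forall i j, (i, j) \in g.2 -> ~~ connect (edge g) j i) /\
  (forall i, isA i || isY i -> i \in g.1) /\
  (forall i j, isY i -> isA j -> ~~ connect (edge g) i j).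

Definition parents (n : nat) (g : DAG n) (i : 'I_n) : {set 'I_n} :=
  [set j in g.1 | (j, i) \in g.2].

Definition pR {R : realType} (n : nat) (p : X n -> R) (g : DAG n) (x : X n)
  : R := \prod_(i in g.1) cond p i (parents g i) x.

(* canonical embedding of X_N into X: coordinates outside N set to 0 *)
Definition inXN (n : nat) (g : DAG n) (x : X n) : bool :=
  [forall i, (i \notin g.1) ==> ~~ x i].

Definition pRcondY {R : realType} (n : nat) (p : X n -> R) (g : DAG n)
  (b : bool) : R :=
  (\sum_(x : X n | [&& inXN g x, aval x == b & yval x]) pR p g x) /
  (\sum_(x : X n | inXN g x && (aval x == b)) pR p g x).

Definition Vutil {R : realType} (n : nat) (p : X n -> R) (g : DAG n) (d : R)
  : R := d * pRcondY p g true + (1 - d) * pRcondY p g false.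

Definition Uutil {R : realType} (n : nat) (C : R -> R) (dstar : R)
  (p : X n -> R) (g : DAG n) (d : R) : R :=
  Vutil p g d - C (d - dstar).

Definition inD {R : realType} (eps d : R) : Prop := eps <= d <= 1 - eps.

Definition optimal {R : realType} (n : nat) (mu : R) (Q : seq {ffun X n -> R})
  (Rs : seq (DAG n)) (eps dstar : R) (C : R -> R) (alpha : R)
  (p : X n -> R) (g : DAG n) (d : R) : Prop :=
  inP alpha mu Q p /\ g \in Rs /\ inD eps d /\
  forall p' g' d', inP alpha mu Q p' -> g' \in Rs -> inD eps d' ->
    Uutil C dstar p' g' d' <= Uutil C dstar p g d.

(* (alpha, sigma) is an equilibrium, where sigma is the probability
   distribution putting weight w k on the narrative-policy pair
   ((ps k, gs k), ds k), k < m. *)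
Definition is_equilibrium {R : realType} (n : nat) (mu : R)
  (Q : seq {ffun X n -> R}) (Rs : seq (DAG n)) (eps dstar : R) (C : R -> R)
  (alpha : R) (m : nat) (w : 'I_m -> R) (ps : 'I_m -> X n -> R)
  (gs : 'I_m -> DAG n) (ds : 'I_m -> R) : Prop :=
  0 <= alpha <= 1 /\
  (forall k, 0 <= w k) /\ \sum_(k < m) w k = 1 /\
  (forall k, 0 < w k -> optimal mu Q Rs eps dstar C alpha (ps k) (gs k) (ds k)) /\
  alpha = \sum_(k < m) w k * ds k.

Definition convex_fun {R : realType} (C : R -> R) : Prop :=
  forall x y t : R, 0 <= t <= 1 ->
    C (t * x + (1 - t) * y) <= t * C x + (1 - t) * C y.

Definition admissible_cost {R : realType} (C : R -> R) : Prop :=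
  (forall x, C (- x) = C x) /\ convex_fun C /\ C 0 = 0 /\
  derivable C 0 1 /\ derive1 C 0 = 0.

From HB Require Import structures.
From mathcomp Require Import all_boot all_order all_algebra.
From mathcomp Require Import all_classical all_reals all_analysis.
From mathcomp Require Import ring lra.
Import Order.TTheory GRing.Theory Num.Theory numFieldNormedType.Exports.
Set Implicit Arguments. Unset Strict Implicit. Unset Printing Implicit Defensive.
Local Open Scope classical_set_scope.
Local Open Scope ring_scope.

(* For 0 < al < 1 the distributions in P_{al,mu} are exactly
   p(x) = al^a (1 - al)^(1 - a) mu^y (1 - mu)^(1 - y) q(x) with q in Q, so a
   narrative is a pair (q, g) in Q x Rs, and its net utility
   d a(al) + (1 - d) b(al) - C(d - d* ) depends continuously on al: every term
   of p_R is positive, and C, being convex, is Lipschitz on [-1, 1].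
   Let Up(al) and Dn(al) be the best net utility over all narratives and all
   policies in [al, 1 - eps], resp. [eps, al].  Indexing these intervals by
   [0, 1] turns the utilities into an equicontinuous family, so Up and Dn are
   continuous; as Up(eps) >= Dn(eps) and Up(1 - eps) <= Dn(1 - eps), they agree
   at some al.  There optimal policies d1 >= al and d2 <= al both exist, and
   mixing them so that the average policy is al gives an equilibrium. *)

Lemma near_all_mem (T : Type) (F : set_system T) (I : eqType) (s : seq I)
    (P : I -> T -> Prop) : Filter F ->
  (forall i, i \in s -> \forall t \near F, P i t) ->
  \forall t \near F, forall i, i \in s -> P i t.
Proof.
move=> FF; elim: s => [|j s IHs] Ps; first by apply: nearW => t i.
apply: filterS2 (Ps j (mem_head _ _)) (IHs _) => [t Pj Ps' i|i si].
  by rewrite in_cons => /predU1P[->|]; last exact: Ps'.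
by apply: Ps; rewrite in_cons si orbT.
Qed.

Section RealAnalysis.
Variable R : realType.

Lemma near_dist_le (x e : R) : 0 < e -> \forall y \near x, `|x - y| <= e.
Proof. by move=> e0; have /cvgrPdist_le := @cvg_id _ (nbhs x); apply. Qed.

Lemma near_lipschitz_cont (f : R -> R) (x k : R) :
  (\forall y \near x, `|f x - f y| <= k * `|x - y|) -> {for x, continuous f}.
Proof.
move=> f_lip; apply/cvgrPdist_le => e e0.
have k1_gt0 : 0 < `|k| + 1 by rewrite ltr_wpDl.
apply: filterS2 f_lip (near_dist_le x (divr_gt0 e0 k1_gt0)) => y fy xy.
apply: (le_trans fy); apply: (le_trans (ler_wpM2r (normr_ge0 _) (ler_norm k))).
apply: (le_trans (ler_wpM2l (normr_ge0 _) xy)).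
by rewrite mulrA ler_pdivrMr //; lra.
Qed.

Lemma sup_equicontinuous (T : Type) (J : set T) (F : T -> R -> R) (x : R) :
  J !=set0 -> has_ubound [set F j x | j in J] ->
  (forall e, 0 < e -> \forall y \near x, forall j, J j -> `|F j x - F j y| <= e) ->
  {for x, continuous (fun y => sup [set F j y | j in J])}.
Proof.
move=> [j0 Jj0] ubx equi; apply/cvgrPdist_le => e e0.
apply: filterS (equi e e0) => y Fxy.
have ne z : [set F j z | j in J] !=set0 by exists (F j0 z), j0.
have Fx_le j : J j -> F j x <= sup [set F j x | j in J].
  by move=> Jj; apply: ub_le_sup => //; exists j.
have uby : ubound [set F j y | j in J] (sup [set F j x | j in J] + e).
  move=> _ [j Jj <-]; have := Fx_le j Jj; have := Fxy j Jj.
  by rewrite ler_norml => /andP[]; lra.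
have le_xy := ge_sup (ne y) uby.
have le_yx : sup [set F j x | j in J] <= sup [set F j y | j in J] + e.
  apply: ge_sup (ne x) _ => _ [j Jj <-].
  have Fy_le : F j y <= sup [set F j y | j in J].
    by apply: ub_le_sup; [exists (sup [set F j x | j in J] + e) | exists j].
  by have := Fxy j Jj; rewrite ler_norml => /andP[]; lra.
by rewrite ler_norml; apply/andP; split; lra.
Qed.

Lemma seq_argmax (T : Type) (I : eqType) (s : seq I) (D : set T) (f : I -> T -> R) :
  s != [::] ->
  (forall i, i \in s -> exists2 d, D d & forall d', D d' -> f i d' <= f i d) ->
  exists i d, [/\ i \in s, D d & forall j d', j \in s -> D d' -> f j d' <= f i d].
Proof.
elim: s => [//|i s IHs] _ max_i.
have [d' Dd' id'] := max_i i (mem_head _ _).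
case: s IHs max_i => [_ _|j s IHs max_i].
  exists i, d'; split; rewrite ?mem_head // => j d.
  by rewrite mem_seq1 => /eqP->; exact: id'.
have [k [d [ks Dd kd]]] : exists k d, [/\ k \in j :: s, D d &
    forall l d', l \in j :: s -> D d' -> f l d' <= f k d].
  by apply: IHs => // k ks; apply: max_i; rewrite in_cons ks orbT.
case: (lerP (f i d') (f k d)) => [le_ik | /ltW le_ki].
  exists k, d; split => [|//|l d'' /predU1P[->|ls] Dd'']; last exact: kd.
    by rewrite in_cons ks orbT.
  exact: le_trans (id' _ Dd'') le_ik.
exists i, d'; split => [|//|l d'' /predU1P[->|ls] Dd'']; first exact: mem_head.
  exact: id'.
exact: le_trans (kd l d'' ls Dd'') le_ki.
Qed.

Lemma line_path_between (u v a b t : R) : 0 <= t <= 1 -> u <= a <= v -> u <= b <= v ->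
  u <= line_path a b t <= v.
Proof. by rewrite /line_path => /andP[? ?] /andP[? ?] /andP[? ?]; apply/andP; split; nra. Qed.

Lemma line_path_onto (a b x : R) : a <= x <= b -> exists2 t, 0 <= t <= 1 & x = line_path a b t.
Proof.
move=> axb; case: (eqVneq a b) axb => [<- | ab] axb.
  exists 0; first by rewrite lexx ler01.
  by rewrite line_path0; apply/eqP; rewrite eq_le andbC.
exists (factor a b x); last by rewrite factorK.
by have := @mem_factor_itv R true false a b; apply; rewrite /= in_itv.
Qed.

Lemma line_path_dist (a b a' b' t : R) : 0 <= t <= 1 ->
  `|line_path a b t - line_path a' b' t| <= `|a - a'| + `|b - b'|.
Proof.
move=> /andP[t0 t1].
have -> : line_path a b t - line_path a' b' t = (1 - t) * (a - a') + t * (b - b').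
  by rewrite /line_path; ring.
apply: (le_trans (ler_normD _ _)).
rewrite !normrM [`|t|]ger0_norm // [`|1 - t|]ger0_norm ?subr_ge0 //.
have := normr_ge0 (a - a'); have := normr_ge0 (b - b'); nra.
Qed.

End RealAnalysis.

Lemma sumr_gt0_witness (R : numDomainType) (I : finType) (P : pred I) (F : I -> R) i0 :
  P i0 -> (forall i, P i -> 0 < F i) -> 0 < \sum_(i | P i) F i.
Proof.
move=> Pi0 F_gt0; rewrite (bigD1 i0) //= ltr_wpDr ?F_gt0 //.
by apply: sumr_ge0 => i /andP[Pi _]; exact/ltW/F_gt0.
Qed.

Section ConvexCost.
Variables (R : realType) (C : R -> R).
Hypothesis C_adm : admissible_cost C.

Lemma cost_ge0 x : 0 <= C x.
Proof.
case: C_adm => C_sym [C_cvx [C0 _]].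
have := C_cvx x (- x) (1 / 2); rewrite C_sym.
have -> : 1 / 2 * x + (1 - 1 / 2) * - x = 0 by field.
by rewrite C0; lra.
Qed.

Lemma cost_slope x y : -1 <= x -> x <= y -> y <= 1 -> C y - C x <= C 2 * (y - x).
Proof.
case: C_adm => _ [C_cvx _] x_ge y_ge_x y_le.
(* [y] is the convex combination [t x + (1 - t) 2]. *)
pose t := (2 - y) / (2 - x).
have t01 : 0 <= t <= 1 by rewrite divr_ge0 ?ler_pdivrMr /=; lra.
have yE : t * x + (1 - t) * 2 = y by rewrite /t; field; lra.
have := C_cvx x 2 t t01; rewrite yE.
have t_le_t' : 1 - t <= y - x.
  have -> : 1 - t = (y - x) / (2 - x) by rewrite /t; field; lra.
  by rewrite ler_pdivrMr; [nra | lra].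
have := ler_wpM2r (cost_ge0 2) t_le_t'.
have : 0 <= (1 - t) * C x by rewrite mulr_ge0 ?cost_ge0 //; lra.
lra.
Qed.

Lemma cost_dist x y : -1 <= x -> x <= y -> y <= 1 -> `|C y - C x| <= C 2 * (y - x).
Proof.
case: C_adm => C_sym _ x_ge xy y_le.
have := cost_slope (x := - y) (y := - x); rewrite !C_sym opprK.
have := cost_slope x_ge xy y_le.
move=> up /(_ _ _ _) down; rewrite ler_norml; apply/andP; split; last exact: up.
by have := down (ltac:(lra)) (ltac:(lra)) (ltac:(lra)); lra.
Qed.

Lemma cost_lipschitz x y : -1 <= x <= 1 -> -1 <= y <= 1 -> `|C x - C y| <= C 2 * `|x - y|.
Proof.
move=> /andP[x_ge x_le] /andP[y_ge y_le]; case: (lerP x y) => [xy | /ltW yx].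
  by rewrite distrC cost_dist.
by rewrite cost_dist.
Qed.

End ConvexCost.

Section BestReply.
Variables (R : realType) (I : eqType) (s : seq I) (a b : I -> R -> R) (C : R -> R).
Variables (eps dstar : R).
Hypothesis s_neq0 : s != [::].
Hypothesis C_adm : admissible_cost C.
Hypothesis eps_gt0 : 0 < eps.
Hypothesis eps_le : eps <= 1 - eps.
Hypothesis dstar01 : 0 <= dstar <= 1.
Hypothesis ab_cont : forall i al, i \in s -> eps <= al <= 1 - eps ->
  {for al, continuous (a i)} /\ {for al, continuous (b i)}.

Lemma itv_eps_01 x : eps <= x -> x <= 1 - eps -> 0 <= x <= 1.
Proof. by move=> ex xe; rewrite (le_trans (ltW eps_gt0) ex) (le_trans xe) // gerBl ltW. Qed.

(* [a i al] and [b i al] stand for p_R(y = 1 | a = 1) and p_R(y = 1 | a = 0)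
   under narrative [i] when p(a = 1) = al. *)
Definition utility i al d := d * a i al + (1 - d) * b i al - C (d - dstar).

Lemma utility_dist i al be d d' : 0 <= d <= 1 -> 0 <= d' <= 1 ->
  `|utility i al d - utility i be d'| <=
    `|a i al - a i be| + `|b i al - b i be|
    + (`|a i al| + `|b i al| + C 2) * `|d - d'|.
Proof.
move=> /andP[d0 d1] /andP[d'0 d'1].
have -> : utility i al d - utility i be d' =
    d' * (a i al - a i be) + (1 - d') * (b i al - b i be)
    + (d - d') * (a i al - b i al) - (C (d - dstar) - C (d' - dstar)).
  by rewrite /utility; ring.
have Ca : `|d' * (a i al - a i be)| <= `|a i al - a i be|.
  by rewrite normrM ger0_norm // ler_piMl.
have Cb : `|(1 - d') * (b i al - b i be)| <= `|b i al - b i be|.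
  by rewrite normrM ger0_norm ?subr_ge0 // ler_piMl ?subr_ge0 // lerBlDr lerDl.
have Cd : `|(d - d') * (a i al - b i al)| <= `|d - d'| * (`|a i al| + `|b i al|).
  by rewrite normrM ler_wpM2l ?ler_normB.
have CC : `|C (d - dstar) - C (d' - dstar)| <= C 2 * `|d - d'|.
  have -> : d - d' = (d - dstar) - (d' - dstar) by ring.
  by case/andP: dstar01 => *; apply: cost_lipschitz => //; apply/andP; split; lra.
apply: (le_trans (ler_normB _ _)).
have := ler_normD (d' * (a i al - a i be)) ((1 - d') * (b i al - b i be)).
have := ler_normD (d' * (a i al - a i be) + (1 - d') * (b i al - b i be))
  ((d - d') * (a i al - b i al)).
lra.
Qed.

Lemma utility_cont i al d : 0 < d < 1 -> {for d, continuous (utility i al)}.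
Proof.
move=> /andP[d0 d1]; apply: (@near_lipschitz_cont _ _ _ (`|a i al| + `|b i al| + C 2)).
have r_gt0 : 0 < Num.min d (1 - d) by rewrite lt_min d0 subr_gt0.
apply: filterS (near_dist_le d r_gt0) => d' dd'.
rewrite le_min !ler_norml in dd'; case/andP: dd' => /andP[? ?] /andP[? ?].
have := @utility_dist i al al d d'; rewrite !subrr !normr0 !add0r.
by apply; apply/andP; split; lra.
Qed.

Definition choices : set (I * R) := [set it | it.1 \in s /\ 0 <= it.2 <= 1].

(* A policy in [lo, hi] is indexed by the t in [0, 1] with d = line_path lo hi t,
   so that the index set stays fixed when the endpoints move (see [best_cont]). *)
Definition best (lo hi al : R) : R :=
  sup [set utility it.1 al (line_path lo hi it.2) | it in choices].

Lemma best_attained lo hi al : eps <= lo -> lo <= hi -> hi <= 1 - eps ->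
  exists i d, [/\ i \in s, lo <= d <= hi, best lo hi al = utility i al d &
    forall j d', j \in s -> lo <= d' <= hi -> utility j al d' <= best lo hi al].
Proof.
move=> lo_ge lohi hi_le.
have [i [d [si dD imax]]] : exists i d, [/\ i \in s, lo <= d <= hi &
    forall j d', j \in s -> lo <= d' <= hi -> utility j al d' <= utility i al d].
  apply: seq_argmax => // j _.
  have [|d dD jmax] := EVT_max lohi (f := utility j al).
    apply: continuous_in_subspaceT => d /set_mem; rewrite /= in_itv /= => /andP[lo_d d_hi].
    apply: utility_cont; rewrite (lt_le_trans eps_gt0 (le_trans lo_ge lo_d)) /=.
    by rewrite (le_lt_trans (le_trans d_hi hi_le)) // ltrBlDr ltrDl.
  by exists d => [|d' d'D]; rewrite -?in_itv //; apply: jmax; rewrite in_itv.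
have ub : ubound [set utility it.1 al (line_path lo hi it.2) | it in choices] (utility i al d).
  move=> _ [[j t] [sj t01] <-]; apply: imax => //.
  apply: line_path_between => //; rewrite ?lexx ?lohi //.
have best_eq : best lo hi al = utility i al d.
  apply/le_anti/andP; split.
    apply: ge_sup ub; exists (utility i al (line_path lo hi 0)), (i, 0) => //.
    by split; rewrite //= lexx ler01.
  have [t t01 dE] := line_path_onto dD.
  by apply: ub_le_sup; [exists (utility i al d) | exists (i, t); rewrite /= ?dE].
by exists i, d; split => // j d' sj d'D; rewrite best_eq; apply: imax.
Qed.

Lemma utility_osc_near i (lo hi : R -> R) al e : i \in s -> eps <= al <= 1 - eps ->
  {for al, continuous lo} -> {for al, continuous hi} -> 0 < e ->
  \forall be \near al, `|a i al - a i be| + `|b i al - b i be|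
    + (`|a i al| + `|b i al| + C 2) * (`|lo al - lo be| + `|hi al - hi be|) <= e.
Proof.
move=> si al_in lo_cont hi_cont e0; have [a_cont b_cont] := ab_cont si al_in.
set K := _ + C 2.
have osc_cvg : (fun be => `|a i al - a i be| + `|b i al - b i be|
    + K * (`|lo al - lo be| + `|hi al - hi be|)) @ al -->
    `|a i al - a i al| + `|b i al - b i al| + K * (`|lo al - lo al| + `|hi al - hi al|).
  apply: cvgD; [apply: cvgD | apply: cvgM; [exact: cvg_cst | apply: cvgD]];
    by apply: cvg_norm; apply: cvgB; [exact: cvg_cst | ].
move: osc_cvg; rewrite !subrr !normr0 !addr0 mulr0 addr0 => /cvgr_norm_le /(_ e).
by rewrite normr0 => /(_ e0); apply: filterS => be; apply: le_trans (ler_norm _).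
Qed.

Lemma best_cont (lo hi : R -> R) al : eps <= al <= 1 - eps ->
  eps <= lo al -> lo al <= hi al -> hi al <= 1 - eps ->
  {for al, continuous lo} -> {for al, continuous hi} ->
  {for al, continuous (fun be => best (lo be) (hi be) be)}.
Proof.
move=> al_in lo_ge lohi hi_le lo_cont hi_cont.
have [i [d [si _ _ best_max]]] := best_attained al lo_ge lohi hi_le.
apply: sup_equicontinuous => [|{i d si}|e e0].
- by exists (i, 0); split; rewrite //= lexx ler01.
- exists (best (lo al) (hi al) al) => _ [[j t] [sj t01] <-]; apply: best_max => //.
  by apply: line_path_between; rewrite ?lexx ?lohi.
have ends01 : \forall be \near al, 0 <= lo be <= 1 /\ 0 <= hi be <= 1.
  move/cvgrPdist_le : lo_cont => /(_ _ eps_gt0) lo_near.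
  move/cvgrPdist_le : hi_cont => /(_ _ eps_gt0) hi_near.
  apply: filterS2 lo_near hi_near => be; rewrite !ler_norml => /andP[? ?] /andP[? ?].
  by split; apply/andP; split; lra.
apply: filterS2 ends01 (near_all_mem _ (fun j sj => utility_osc_near sj al_in lo_cont hi_cont e0)).
move=> be [lo01 hi01] osc [j t] [/= sj t01].
have d01 : 0 <= line_path (lo al) (hi al) t <= 1.
  apply: line_path_between => //; first exact: itv_eps_01 lo_ge (le_trans lohi hi_le).
  exact: itv_eps_01 (le_trans lo_ge lohi) hi_le.
apply: le_trans (utility_dist j al be d01 (line_path_between t01 lo01 hi01)) _.
apply: le_trans (osc j sj); rewrite lerD2l ler_wpM2l ?line_path_dist //.
by rewrite !addr_ge0 ?(cost_ge0 C_adm).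
Qed.

Definition best_reply al i d := [/\ i \in s, eps <= d <= 1 - eps &
  forall j d', j \in s -> eps <= d' <= 1 - eps -> utility j al d' <= utility i al d].

Lemma best_replies_around : exists al i1 d1 i2 d2,
  [/\ eps <= al <= 1 - eps, d2 <= al <= d1, best_reply al i1 d1 & best_reply al i2 d2].
Proof.
pose gap al := best al (1 - eps) al - best eps al al.
have gap_cont : {within `[eps, 1 - eps], continuous gap}.
  apply: continuous_in_subspaceT => al /set_mem; rewrite /= in_itv /= => al_in.
  have /andP[al_ge al_le] := al_in.
  apply: cvgB; [apply: (@best_cont id (fun=> 1 - eps)) | apply: (@best_cont (fun=> eps) id)];
    rewrite //=; by [exact: cvg_id | exact: cvg_cst].
have gap_eps : 0 <= gap eps.
  have [j [d [sj /andP[d_ge d_le] dn_eq _]]] := best_attained eps (lexx eps) (lexx eps) eps_le.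
  have [_ [_ [_ _ _ up_max]]] := best_attained eps (lexx eps) eps_le (lexx _).
  by rewrite /gap dn_eq subr_ge0 up_max // d_ge (le_trans d_le eps_le).
have gap_1eps : gap (1 - eps) <= 0.
  have [j [d [sj /andP[d_ge d_le] up_eq _]]] := best_attained (1 - eps) eps_le (lexx _) (lexx _).
  have [_ [_ [_ _ _ dn_max]]] := best_attained (1 - eps) (lexx eps) eps_le (lexx _).
  by rewrite /gap up_eq subr_le0 dn_max // d_le (le_trans eps_le d_ge).
have [|al] := IVT eps_le gap_cont (v := 0); first by rewrite ge_min le_max gap_1eps gap_eps orbT.
rewrite in_itv /= => /andP[al_ge al_le] /eqP; rewrite subr_eq0 => /eqP up_dn.
have [i1 [d1 [si1 d1D up_eq up_max]]] := best_attained al al_ge al_le (lexx _).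
have [i2 [d2 [si2 d2D dn_eq dn_max]]] := best_attained al (lexx _) al_ge al_le.
have all_max j d : j \in s -> eps <= d <= 1 - eps -> utility j al d <= best al (1 - eps) al.
  move=> sj /andP[d_ge d_le]; case: (lerP al d) => [al_d | /ltW d_al].
    by apply: up_max; rewrite ?al_d.
  by rewrite up_dn; apply: dn_max; rewrite ?d_ge.
case/andP: d1D => al_d1 d1_le; case/andP: d2D => d2_ge d2_al.
exists al, i1, d1, i2, d2; split; rewrite ?al_ge ?d2_al //.
  by split => //; [rewrite (le_trans al_ge al_d1) | rewrite -up_eq].
by split => //; [rewrite d2_ge (le_trans d2_al al_le) | rewrite -dn_eq -up_dn].
Qed.

End BestReply.

Section Endpoints.
Variables (R : realType) (n : nat).
Hypothesis n_gt1 : (1 < n)%N.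

Definition a_idx : 'I_n := Ordinal (ltnW n_gt1).
Fact pred_n_lt : (n.-1 < n)%N. Proof. by rewrite ltn_predL ltnW. Qed.
Definition y_idx : 'I_n := Ordinal pred_n_lt.

Lemma a_idx_neq_y_idx : a_idx != y_idx.
Proof. by rewrite -val_eqE /=; case: n n_gt1 => [|[|m]]. Qed.

Lemma isAE i : isA i = (i == a_idx).
Proof. by rewrite /isA -val_eqE. Qed.

Lemma isYE i : isY i = (i == y_idx).
Proof. by rewrite /isY -val_eqE. Qed.

Lemma avalE (x : X n) : aval x = x a_idx.
Proof.
apply/existsP/idP => [[i]|xa]; first by rewrite isAE => /andP[/eqP->].
by exists a_idx; rewrite isAE eqxx.
Qed.

Lemma yvalE (x : X n) : yval x = x y_idx.
Proof.
apply/existsP/idP => [[i]|xy]; first by rewrite isYE => /andP[/eqP->].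
by exists y_idx; rewrite isYE eqxx.
Qed.

Lemma endptsE (z x : X n) :
  [forall i in endpts n, z i == x i] = (aval z == aval x) && (yval z == yval x).
Proof.
rewrite !avalE !yvalE; apply/forall_inP/andP => [zx|[/eqP za /eqP zy] i].
  by split; apply: zx; rewrite inE ?isAE ?isYE eqxx ?orbT.
by rewrite inE isAE isYE => /orP[] /eqP->; rewrite ?za ?zy.
Qed.

Definition endpoint_point (a y : bool) : X n :=
  [ffun i => if i == a_idx then a else (i == y_idx) && y].

Lemma aval_endpoint_point a y : aval (endpoint_point a y) = a.
Proof. by rewrite avalE ffunE eqxx. Qed.

Lemma yval_endpoint_point a y : yval (endpoint_point a y) = y.
Proof. by rewrite yvalE ffunE eq_sym (negbTE a_idx_neq_y_idx) eqxx. Qed.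

Definition cell (p : X n -> R) (a y : bool) : R :=
  \sum_(x | (aval x == a) && (yval x == y)) p x.

Lemma marg_endpts (p : X n -> R) x : marg p (endpts n) x = cell p (aval x) (yval x).
Proof. by apply: eq_bigl => z; rewrite endptsE. Qed.

Lemma probA_cell (p : X n -> R) b : probA p b = cell p b true + cell p b false.
Proof.
rewrite /probA (bigID (@yval n)) /=.
by congr (_ + _); apply: eq_bigl => x; case: (yval x); rewrite ?andbT ?andbF.
Qed.

Lemma sum_probA (p : X n -> R) : \sum_x p x = probA p true + probA p false.
Proof.
rewrite (bigID (@aval n)) /=.
by congr (_ + _); apply: eq_bigl => x; case: (aval x).
Qed.

Lemma condYA_cell (p : X n -> R) b : condYA p b = cell p b true / probA p b.
Proof. by congr (_ / _); apply: eq_bigl => x; rewrite eqb_id. Qed.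

Lemma cell_full_cond (q : {ffun X n -> R}) a y :
  is_full_cond_dist q -> cell q a y = 1.
Proof.
case=> _ q1; rewrite -(q1 (endpoint_point a y)); apply: eq_bigl => z.
by rewrite endptsE aval_endpoint_point yval_endpoint_point.
Qed.

Lemma exists_inXN_aval (g : DAG n) b :
  (forall i, isA i -> i \in g.1) -> exists x, inXN g x && (aval x == b).
Proof.
move=> gA; exists (endpoint_point b false); rewrite aval_endpoint_point eqxx andbT.
apply/forallP => i; apply/implyP => ig; rewrite ffunE.
case: eqP => [ia|_]; last by rewrite andbF.
by move: ig; rewrite gA // isAE ia.
Qed.

End Endpoints.

Section NarrativeDistributions.
Variables (R : realType) (n : nat) (mu : R) (Q : seq {ffun X n -> R}).
Hypothesis n_gt1 : (1 < n)%N.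
Hypothesis mu01 : 0 < mu < 1.
Hypothesis Q_full : forall q, q \in Q -> is_full_cond_dist q.

Definition bern (r : R) (b : bool) : R := if b then r else 1 - r.

Definition joint (al : R) (q : X n -> R) (x : X n) : R :=
  bern al (aval x) * bern mu (yval x) * q x.

Lemma bern_gt0 r b : 0 < r < 1 -> 0 < bern r b.
Proof. by case: b => /andP[r0 r1] //=; rewrite subr_gt0. Qed.

Lemma bern_sum r : bern r true + bern r false = 1.
Proof. by rewrite /= addrC subrK. Qed.

Lemma joint_gt0 al q x : 0 < al < 1 -> (forall z, 0 < q z) -> 0 < joint al q x.
Proof. by move=> al01 q_gt0; rewrite !mulr_gt0 // bern_gt0. Qed.

Lemma cell_joint al q a y : cell (joint al q) a y = bern al a * bern mu y * cell q a y.
Proof.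
by rewrite /cell mulr_sumr; apply: eq_bigr => x /andP[/eqP<- /eqP<-].
Qed.

Lemma joint_inP al q : 0 < al < 1 -> q \in Q -> inP al mu Q (joint al q).
Proof.
move=> al01 qQ; have [q_gt0 _] := Q_full qQ.
have cellE a y : cell (joint al q) a y = bern al a * bern mu y.
  by rewrite cell_joint (cell_full_cond n_gt1 _ _ (Q_full qQ)) mulr1.
have probAE b : probA (joint al q) b = bern al b.
  by rewrite probA_cell !cellE -mulrDr bern_sum mulr1.
have cell_neq0 a y : bern al a * bern mu y != 0.
  by rewrite mulf_neq0 // gt_eqF // bern_gt0.
split; [split|split; [|split]].
- by move=> x; rewrite ltW // joint_gt0.
- by rewrite sum_probA !probAE bern_sum.
- exact: probAE.
- move=> b; rewrite condYA_cell probAE cellE mulrC mulKf //.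
  by rewrite gt_eqF // bern_gt0.
- exists q => // x; rewrite (marg_endpts n_gt1) cellE /joint mulrAC divff ?mul1r //.
Qed.

Lemma inP_joint al p : 0 < al < 1 -> inP al mu Q p -> exists2 q, q \in Q & p = joint al q.
Proof.
move=> al01 [[_ p1] [pA [pY [q qQ pq]]]].
have probAE b : probA p b = bern al b.
  by case: b => //=; move: p1; rewrite sum_probA pA; lra.
have cellE a y : cell p a y = bern al a * bern mu y.
  have cellT : cell p a true = bern al a * mu.
    by rewrite mulrC -(pY a) condYA_cell probAE divfK // gt_eqF // bern_gt0.
  by case: y => //=; move: (probA_cell p a); rewrite probAE cellT; lra.
exists q => //; apply/funext => x; rewrite /joint -pq (marg_endpts n_gt1) cellE mulrC divfK //.
by rewrite mulf_neq0 // gt_eqF // bern_gt0.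
Qed.

End NarrativeDistributions.

Section ParametricContinuity.
Variables (R : realType) (n : nat) (P : R -> X n -> R) (al : R).
Hypothesis P_cont : forall x, {for al, continuous (fun c => P c x)}.
Hypothesis P_gt0 : forall x, 0 < P al x.

Lemma marg_cont S x : {for al, continuous (fun c => marg (P c) S x)}.
Proof. by apply: cvg_big => [|z _]; [exact: add_continuous | exact: P_cont]. Qed.

Lemma marg_gt0 S x : 0 < marg (P al) S x.
Proof. by apply: (sumr_gt0_witness (i0 := x)) => //; apply/forall_inP. Qed.

Lemma cond_cont i S x : {for al, continuous (fun c => cond (P c) i S x)}.
Proof.
apply: cvgM; first exact: marg_cont.
by apply: cvgV; [rewrite gt_eqF ?marg_gt0 | exact: marg_cont].
Qed.

Lemma pR_cont g x : {for al, continuous (fun c => pR (P c) g x)}.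
Proof. by apply: cvg_big => [|i _]; [exact: mul_continuous | exact: cond_cont]. Qed.

Lemma pR_gt0 g x : 0 < pR (P al) g x.
Proof. by apply: prodr_gt0 => i _; rewrite divr_gt0 ?marg_gt0. Qed.

Lemma pRcondY_cont g b : (exists x, inXN g x && (aval x == b)) ->
  {for al, continuous (fun c => pRcondY (P c) g b)}.
Proof.
case=> x0 gx0.
have sum_cont (B : pred (X n)) : {for al, continuous (fun c => \sum_(x | B x) pR (P c) g x)}.
  by apply: cvg_big => [|x _]; [exact: add_continuous | exact: pR_cont].
apply: cvgM; first exact: sum_cont.
apply: cvgV; last exact: sum_cont.
by rewrite gt_eqF // (sumr_gt0_witness (i0 := x0)) // => x _; exact: pR_gt0.
Qed.

End ParametricContinuity.

Lemma two_point_equilibrium (R : realType) (n : nat) (mu : R) (Q : seq {ffun X n -> R})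
    (Rs : seq (DAG n)) (eps dstar : R) (C : R -> R) (al t : R)
    (p1 p2 : X n -> R) (g1 g2 : DAG n) (d1 d2 : R) :
  optimal mu Q Rs eps dstar C al p1 g1 d1 -> optimal mu Q Rs eps dstar C al p2 g2 d2 ->
  0 <= t <= 1 -> al = line_path d2 d1 t -> 0 <= al <= 1 ->
  exists (m : nat) (w : 'I_m -> R) (ps : 'I_m -> X n -> R) (gs : 'I_m -> DAG n)
    (ds : 'I_m -> R), is_equilibrium mu Q Rs eps dstar C al w ps gs ds.
Proof.
move=> opt1 opt2 /andP[t0 t1] alE al01.
pose pick T (x1 x2 : T) (k : 'I_2) := if k == ord0 then x1 else x2.
exists 2, (pick _ t (1 - t)), (pick _ p1 p2), (pick _ g1 g2), (pick _ d1 d2).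
rewrite /is_equilibrium !big_ord_recl !big_ord0 /pick /= !addr0.
split; [|split; [|split; [|split]]] => //.
- by case=> [[|[|//]]] //= _; rewrite ?subr_ge0.
- by rewrite addrC subrK.
- by case=> [[|[|//]]].
- by rewrite alE /line_path addrC.
Qed.

Section Narratives.
Variables (R : realType) (n : nat) (mu : R) (Q : seq {ffun X n -> R}) (Rs : seq (DAG n)).
Variables (eps dstar : R) (C : R -> R).
Hypothesis n_gt1 : (1 < n)%N.
Hypothesis mu01 : 0 < mu < 1.
Hypothesis Q_full : forall q, q \in Q -> is_full_cond_dist q.
Hypothesis Rs_adm : forall g, g \in Rs -> admissible g.

Definition narratives := [seq (q, g) | q <- Q, g <- Rs].

Definition perceived_success (b : bool) (k : {ffun X n -> R} * DAG n) (al : R) : R :=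
  pRcondY (joint mu al k.1) k.2 b.

Lemma perceived_success_cont b k al : k \in narratives -> 0 < al < 1 ->
  {for al, continuous (perceived_success b k)}.
Proof.
case/allpairsP => -[q g] [/= qQ gRs ->] al01; have [q_gt0 _] := Q_full qQ.
have [_ [_ [gA _]]] := Rs_adm gRs.
apply: (@pRcondY_cont _ _ (fun c => joint mu c q)) => [x|x|].
- apply: cvgM; last exact: cvg_cst.
  apply: cvgM; last exact: cvg_cst.
  by case: (aval x); [exact: cvg_id | apply: cvgB; [exact: cvg_cst | exact: cvg_id]].
- exact: joint_gt0.
- by apply: (exists_inXN_aval n_gt1) => i iA; rewrite gA ?iA.
Qed.

Lemma best_reply_optimal al q g d : 0 < eps -> eps <= al <= 1 - eps ->
  best_reply narratives (perceived_success true) (perceived_success false) C eps dstar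
    al (q, g) d ->
  optimal mu Q Rs eps dstar C al (joint mu al q) g d.
Proof.
move=> eps_gt0 /andP[al_ge al_le] [/allpairsP[[q0 g0] [/= qQ gRs [-> ->]]] d_in k_best].
have al01 : 0 < al < 1.
  by apply/andP; split; [exact: lt_le_trans al_ge | rewrite (le_lt_trans al_le) // ltrBlDr ltrDl].
split; first exact: joint_inP.
split => //; split => // _ g' d' /(inP_joint n_gt1 mu01 al01) [q' q'Q ->] g'Rs d'_in.
by apply: (k_best (q', g')) => //; apply: allpairs_f.
Qed.

End Narratives.

Theorem proposition1 (R : realType) (n : nat) (mu : R)
  (Q : seq {ffun X n -> R}) (Rs : seq (DAG n)) (eps dstar : R) (C : R -> R) :
  (2 < n)%N ->
  0 < mu < 1 ->
  Q != [::] -> (forall q, q \in Q -> is_full_cond_dist q) ->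
  Rs != [::] -> (forall g, g \in Rs -> admissible g) ->
  0 < eps < 1 / 2 ->
  inD eps dstar ->
  admissible_cost C ->
  exists (alpha : R) (m : nat) (w : 'I_m -> R) (ps : 'I_m -> X n -> R)
         (gs : 'I_m -> DAG n) (ds : 'I_m -> R),
    is_equilibrium mu Q Rs eps dstar C alpha w ps gs ds.
Proof.
move=> n_gt2 mu01 Q_neq0 Q_full Rs_neq0 Rs_adm /andP[eps_gt0 eps_lt] /andP[ds_ge ds_le] C_adm.
have n_gt1 := ltnW n_gt2.
have eps_le : eps <= 1 - eps by lra.
have dstar01 : 0 <= dstar <= 1 by apply/andP; split; lra.
have narr_neq0 : narratives Q Rs != [::].
  by rewrite -size_eq0 size_allpairs muln_eq0 !size_eq0 negb_or Q_neq0.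
have ab_cont k al : k \in narratives Q Rs -> eps <= al <= 1 - eps ->
    {for al, continuous (perceived_success mu true k)} /\
    {for al, continuous (perceived_success mu false k)}.
  move=> k_narr /andP[al_ge al_le]; have al01 : 0 < al < 1 by apply/andP; split; lra.
  by split; apply: (perceived_success_cont n_gt1 mu01 Q_full Rs_adm).
have [al [[q1 g1] [d1 [[q2 g2] [d2 [al_in d_around br1 br2]]]]]] :=
  best_replies_around narr_neq0 C_adm eps_gt0 eps_le dstar01 ab_cont.
have [t t01 alE] := line_path_onto d_around.
have opt1 := best_reply_optimal n_gt1 mu01 Q_full eps_gt0 al_in br1.
have opt2 := best_reply_optimal n_gt1 mu01 Q_full eps_gt0 al_in br2.
exists al; apply: (two_point_equilibrium opt1 opt2 t01 alE).
by case/andP: al_in => *; apply/andP; split; lra.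
Qed.
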